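(* Let $p,q$ be non-zero coprime integers, and let $1\le k\le |p|-1$, $1\le l\le |q|-1$. Let $z_{ij}\in\mathbb{C}$ ($0\le i\le |q|$, $0\le j\le |p|-1$) be the coordinate of the vertex $v^{|p|,k}_{[i+j+1]}$ of the moving polygon after the $i$-th step of the $(|p|,k;|q|,l)$-trochoid (the $0$-th step being the initial position). Then (i) $z_{i0}=z_{i+1,|p|-1}$ for $0\le i\le |q|-1$; (ii) the rotation about $z_{i0}$ by angle $\theta(|p|,k;|q|,l)$ sends $z_{ij}$ to $z_{i+1,j-1}$ for $0\le i\le|q|-1$, $1\le j\le |p|-1$; (iii) $z_{|q|j}=z_{0j}$ for $0\le j\le|p|-1$; and not all $z_{ij}$ are equal. Consequently, $a_{ij}\mapsto (z_{ij},e^{\theta(|p|,k;|q|,l)\sqrt{-1}})$ is a non-trivial $\mathrm{Rot}(\mathbb{E}^2)$-coloring of the standard diagram $D(p,q)$ of the $(p,q)$-torus knot, with all rotation angles equal to $\theta(|p|,k;|q|,l)$.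
   Context: $\mathrm{Rot}(\mathbb{E}^2)=\mathbb{C}\times\mathrm{U}(1)$ with $(z,e^{\theta\sqrt{-1}})\ast(w,e^{\eta\sqrt{-1}})=((z-w)e^{\eta\sqrt{-1}}+w,e^{\theta\sqrt{-1}})$, i.e. the quandle of rotations of the plane, $(z,e^{\theta\sqrt{-1}})$ being the rotation about $z$ by $\theta$; a coloring of a diagram assigns quandle elements to arcs so that at each crossing (outgoing under arc) $=$ (incoming under arc) $\ast$ (over arc) for the appropriate orientation convention; constant colorings are trivial. Regular polygons: for $m\ge2$ let $v^m_0,\dots,v^m_{m-1}$ be the vertices, in counterclockwise order, of a convex regular $m$-gon in $\mathbb{C}$; for $1\le k\le m-1$ put $v^{m,k}_i=v^m_{[ik]}$, where $[r]\in\{0,\dots,m-1\}$ is the residue of $r$ mod $m$, and let $\Pi(m,k)$ be the (possibly degenerate, star) polygon joining $v^{m,k}_{[i]}$ to $v^{m,k}_{[i+1]}$ for all $i$. For $m,n\ge2$, $1\le k\le m-1$, $1\le l\le n-1$ set $\theta(m,k;n,l)=\bigl(\frac{m-2k}{m}-\frac{n-2l}{n}\bigr)\pi$. The $(m,k;n,l)$-trochoid: take $\Pi(m,k)$ and $\Pi(n,l)$ with equal side lengths, placed so that $v^{m,k}_{[0]}=v^{n,l}_{[0]}$ and $v^{m,k}_{[1]}=v^{n,l}_{[1]}$. Keeping $\Pi(n,l)$ fixed, at the $i$-th step ($i=1,2,\dots$) rotate $\Pi(m,k)$ about its vertex $v^{m,k}_{[i]}$ (which then coincides with $v^{n,l}_{[i]}$,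 indices of $\Pi(n,l)$ taken mod $n$) by angle $\theta(m,k;n,l)$; after this step $v^{m,k}_{[i+1]}$ coincides with $v^{n,l}_{[i+1]}$. Explicitly, with $u_j=v^{n,l}_{[j]}$, $d=u_1-u_0$, $\omega=e^{2\pi k\sqrt{-1}/m}$, $\zeta=e^{2\pi l\sqrt{-1}/n}$, one has $u_{j+1}-u_j=d\zeta^j$, and after the $i$-th step the vertex $v^{m,k}_{[i+j+1]}$ of the moving polygon is at $u_i+d\zeta^i(1+\omega+\dots+\omega^j)$ for $0\le j\le m-1$. The diagram $D(p,q)$: a diagram of the $(p,q)$-torus knot (closed $|p|$-strand braid diagram with $|q|$ blocks) whose arcs are labelled $a_{ij}$, $0\le i\le |q|$, $0\le j\le|p|-1$, with $a_{i0}$ and $a_{i+1,|p|-1}$ denoting the same arc and $a_{|q|j}$, $a_{0j}$ denoting the same arc; in the $i$-th block the arc $a_{i0}$ passes over the strands, and for $1\le j\le|p|-1$ there is a crossing with over arc $a_{i0}$, incoming under arc $a_{ij}$ and outgoing under arc $a_{i+1,j-1}$, whose coloring condition reads $\mathrm{color}(a_{i+1,j-1})=\mathrm{color}(a_{ij})\ast\mathrm{color}(a_{i0})$. *)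

From Stdlib Require Import Reals ZArith Arith Lia Lra.
Open Scope R_scope.

Definition Cx : Type := (R * R)%type.
Definition Cadd (z w : Cx) : Cx := (fst z + fst w, snd z + snd w).
Definition Csub (z w : Cx) : Cx := (fst z - fst w, snd z - snd w).
Definition Cmul (z w : Cx) : Cx :=
  (fst z * fst w - snd z * snd w, fst z * snd w + snd z * fst w).
Definition C1 : Cx := (1, 0).
Definition Cexpi (t : R) : Cx := (cos t, sin t).
Fixpoint Cpow (z : Cx) (n : nat) : Cx :=
  match n with O => C1 | S n' => Cmul (Cpow z n') z end.
Fixpoint Cgeom (w : Cx) (j : nat) : Cx :=
  match j with O => C1 | S j' => Cadd (Cgeom w j') (Cpow w j) end.

Definition rotate (w : Cx) (eta : R) (z : Cx) : Cx :=
  Cadd (Cmul (Csub z w) (Cexpi eta)) w.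

(* The quandle Rot(E^2) = Cx x U(1); elements are pairs (z, u) with |u| = 1.
   (z, e^{theta i}) * (w, e^{eta i}) = ((z - w) e^{eta i} + w, e^{theta i}). *)
Definition RotE : Type := (Cx * Cx)%type.
Definition rot_op (x y : RotE) : RotE :=
  (Cadd (Cmul (Csub (fst x) (fst y)) (snd y)) (fst y), snd x).

Definition theta (m k n l : nat) : R :=
  ((INR m - 2 * INR k) / INR m - (INR n - 2 * INR l) / INR n) * PI.

(* Coordinates of the (m,k;n,l)-trochoid, placed with u_0 = u0 and
   d = u_1 - u_0 (side vector, d <> 0):
   omega = e^{2 pi k i/m}, zeta = e^{2 pi l i/n},
   u_i = u0 + d (1 + zeta + ... + zeta^{i-1}),
   z_{ij} = position of v^{m,k}_{[i+j+1]} after the i-th step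
          = u_i + d zeta^i (1 + omega + ... + omega^j). *)
Definition tro_u (n l : nat) (u0 d : Cx) (i : nat) : Cx :=
  match i with
  | O => u0
  | S i' => Cadd u0 (Cmul d (Cgeom (Cexpi (2 * PI * INR l / INR n)) i'))
  end.
Definition tro_z (m k n l : nat) (u0 d : Cx) (i j : nat) : Cx :=
  Cadd (tro_u n l u0 d i)
       (Cmul (Cmul d (Cpow (Cexpi (2 * PI * INR l / INR n)) i))
             (Cgeom (Cexpi (2 * PI * INR k / INR m)) j)).

(* Arcs are labelled a_{ij}, 0 <= i <= |q|, 0 <= j <= |p|-1, with
   a_{i0} = a_{i+1,|p|-1} and a_{|q|j} = a_{0j}; a coloring is an assignment
   c i j to the labels compatible with these identifications and satisfying the
   crossing conditions c(a_{i+1,j-1}) = c(a_{ij}) * c(a_{i0}). *)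
Definition Dpq_coloring (p q : Z) (c : nat -> nat -> RotE) : Prop :=
  let P := Z.abs_nat p in
  let Q := Z.abs_nat q in
  (forall i, (i < Q)%nat -> c i O = c (S i) (P - 1)%nat) /\
  (forall j, (j < P)%nat -> c Q j = c O j) /\
  (forall i j, (i < Q)%nat -> (1 <= j <= P - 1)%nat ->
     c (S i) (j - 1)%nat = rot_op (c i j) (c i O)).

Definition Dpq_nontrivial (p q : Z) (c : nat -> nat -> RotE) : Prop :=
  exists i j i' j',
    (i <= Z.abs_nat q)%nat /\ (j < Z.abs_nat p)%nat /\
    (i' <= Z.abs_nat q)%nat /\ (j' < Z.abs_nat p)%nat /\
    c i j <> c i' j'.

(* The trochoid points are z_ij = u_i + d zeta^i (1 + omega + ... + omega^j) with
   u_{i+1} = u_i + d zeta^i.  Since omega is a nontrivial m-th root of unity,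
   1 + omega + ... + omega^(m-1) = 0, which gives z_{i0} = z_{i+1,m-1} and
   z_{0,m-1} = u_0 <> u_0 + d = z_00; likewise zeta closes the polygon
   u_0, ..., u_n, giving z_{nj} = z_{0j}.  The angle theta is chosen so that
   e^(theta i) omega = zeta, hence rotating about z_{i0} multiplies
   z_ij - z_{i0} = d zeta^i (omega + ... + omega^j) into
   d zeta^(i+1) (1 + ... + omega^(j-1)) = z_{i+1,j-1} - z_{i0}. *)
From Pilot Require Import Defs.
From Stdlib Require Import Reals ZArith Arith Lia Lra.
Open Scope R_scope.

Local Notation C1 := Pilot.Defs.C1.
Definition C0 : Cx := (0, 0).

Ltac Cx_ring :=
  unfold rotate, Cadd, Csub, Cmul, C1, C0, Cexpi in *;
  repeat match goal with x : Cx |- _ => destruct x end; simpl;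
  try (f_equal; ring).

Lemma Cpow_Sl (w : Cx) (n : nat) : Cpow w (S n) = Cmul w (Cpow w n).
Proof.
  induction n as [|n IHn]; [simpl; Cx_ring|].
  change (Cpow w (S (S n))) with (Cmul (Cpow w (S n)) w).
  rewrite IHn. generalize (Cpow w n). intro c. Cx_ring.
Qed.

Lemma Cgeom_Sl (w : Cx) (j : nat) : Cgeom w (S j) = Cadd C1 (Cmul w (Cgeom w j)).
Proof.
  induction j as [|j IHj]; [simpl; Cx_ring|].
  change (Cgeom w (S (S j))) with (Cadd (Cgeom w (S j)) (Cpow w (S (S j)))).
  rewrite IHj at 1. rewrite (Cpow_Sl w (S j)).
  change (Cgeom w (S j)) with (Cadd (Cgeom w j) (Cpow w (S j))).
  clear IHj. generalize (Cgeom w j) (Cpow w (S j)). intros a b. Cx_ring.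
Qed.

Lemma Cmul_sub1_Cgeom (w : Cx) (j : nat) :
  Cmul (Csub w C1) (Cgeom w j) = Csub (Cpow w (S j)) C1.
Proof.
  induction j as [|j IHj]; [simpl; Cx_ring|].
  change (Cgeom w (S j)) with (Cadd (Cgeom w j) (Cpow w (S j))).
  change (Cpow w (S (S j))) with (Cmul (Cpow w (S j)) w).
  revert IHj. generalize (Cgeom w j) (Cpow w (S j)). intros a b IH.
  transitivity (Cadd (Cmul (Csub w C1) a) (Cmul (Csub w C1) b)); [Cx_ring|].
  rewrite IH. Cx_ring.
Qed.

Lemma Cmul_eq0 (a b : Cx) : a <> C0 -> Cmul a b = C0 -> b = C0.
Proof.
  destruct a as [x y], b as [u v]. unfold Cmul, C0; simpl. intros Ha H.
  injection H as H1 H2.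
  assert (Hs : x * x + y * y <> 0).
  { intro Hs. apply Ha. assert (x = 0) by nra. assert (y = 0) by nra. subst; auto. }
  assert (Hu : (x * x + y * y) * u = 0).
  { replace ((x * x + y * y) * u) with (x * (x * u - y * v) + y * (x * v + y * u)) by ring.
    rewrite H1, H2; ring. }
  assert (Hv : (x * x + y * y) * v = 0).
  { replace ((x * x + y * y) * v) with (x * (x * v + y * u) - y * (x * u - y * v)) by ring.
    rewrite H1, H2; ring. }
  apply Rmult_integral in Hu; apply Rmult_integral in Hv.
  destruct Hu, Hv; try contradiction. subst; auto.
Qed.

Lemma Cgeom_root_unity (w : Cx) (m : nat) :
  (1 <= m)%nat -> Cpow w m = C1 -> w <> C1 -> Cgeom w (m - 1) = C0.
Proof.
  intros Hm Hpow Hw. apply (Cmul_eq0 (Csub w C1)).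
  - intro H. apply Hw. destruct w as [a b]. unfold Csub, C1, C0 in *; simpl in *.
    injection H as H1 H2. f_equal; lra.
  - rewrite Cmul_sub1_Cgeom. replace (S (m - 1)) with m by lia. rewrite Hpow. Cx_ring.
Qed.

Lemma Cexpi_add (a b : R) : Cmul (Cexpi a) (Cexpi b) = Cexpi (a + b).
Proof. unfold Cmul, Cexpi; simpl. rewrite cos_plus, sin_plus. f_equal; ring. Qed.

Lemma Cpow_Cexpi (a : R) (n : nat) : Cpow (Cexpi a) n = Cexpi (INR n * a).
Proof.
  induction n as [|n IHn].
  - simpl. rewrite Rmult_0_l. unfold Cexpi, C1. rewrite cos_0, sin_0. reflexivity.
  - simpl Cpow. rewrite IHn, Cexpi_add, S_INR. f_equal. ring.
Qed.

Lemma Cpow_root_unity (k m : nat) :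
  (m <> 0)%nat -> Cpow (Cexpi (2 * PI * INR k / INR m)) m = C1.
Proof.
  intro Hm. rewrite Cpow_Cexpi.
  assert (HR : INR m <> 0) by (apply not_0_INR; auto).
  replace (INR m * (2 * PI * INR k / INR m)) with (0 + 2 * INR k * PI) by (field; auto).
  unfold Cexpi, C1. rewrite cos_period, sin_period, cos_0, sin_0. reflexivity.
Qed.

(* cos x = 1 - 2 sin^2 (x/2), and 0 < x/2 < pi. *)
Lemma root_unity_neq1 (k m : nat) :
  (1 <= k <= m - 1)%nat -> Cexpi (2 * PI * INR k / INR m) <> C1.
Proof.
  intros Hk.
  assert (Hm : 0 < INR m) by (apply lt_0_INR; lia).
  assert (Hk1 : 1 <= INR k) by (apply (le_INR 1); lia).
  assert (Hkm : INR k < INR m) by (apply lt_INR; lia).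
  pose proof PI_RGT_0 as Hpi.
  set (x := 2 * PI * INR k / INR m).
  assert (Hpos : 0 < x / 2).
  { unfold x. apply Rdiv_lt_0_compat; [|lra]. apply Rdiv_lt_0_compat; [|lra]. nra. }
  assert (Hlt : x / 2 < PI).
  { unfold x. apply Rmult_lt_reg_r with (2 * INR m); [nra|].
    field_simplify; [|lra]. nra. }
  pose proof (sin_gt_0 _ Hpos Hlt) as Hsin.
  unfold Cexpi, C1. intro H. injection H as Hcos _.
  replace x with (2 * (x / 2)) in Hcos by field. rewrite cos_2a_sin in Hcos. nra.
Qed.

Lemma Cgeom_primitive_root (k m : nat) :
  (1 <= k <= m - 1)%nat -> Cgeom (Cexpi (2 * PI * INR k / INR m)) (m - 1) = C0.
Proof.
  intro Hk. apply Cgeom_root_unity; [lia | apply Cpow_root_unity; lia |].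
  exact (root_unity_neq1 k m Hk).
Qed.

(* [tro_u n l] and [tro_z m k n l] are these with omega = e^(2 pi k i/m) and
   zeta = e^(2 pi l i/n) substituted, up to conversion. *)
Definition trochoid_u (zeta u0 d : Cx) (i : nat) : Cx :=
  match i with O => u0 | S i' => Cadd u0 (Cmul d (Cgeom zeta i')) end.

Definition trochoid_z (omega zeta u0 d : Cx) (i j : nat) : Cx :=
  Cadd (trochoid_u zeta u0 d i) (Cmul (Cmul d (Cpow zeta i)) (Cgeom omega j)).

Lemma trochoid_u_S (zeta u0 d : Cx) (i : nat) :
  trochoid_u zeta u0 d (S i) = Cadd (trochoid_u zeta u0 d i) (Cmul d (Cpow zeta i)).
Proof.
  destruct i as [|i]; [simpl; Cx_ring|]. unfold trochoid_u.
  change (Cgeom zeta (S i)) with (Cadd (Cgeom zeta i) (Cpow zeta (S i))).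
  generalize (Cgeom zeta i) (Cpow zeta (S i)). intros a b. Cx_ring.
Qed.

Lemma trochoid_z_S_last (omega zeta u0 d : Cx) (m i : nat) :
  Cgeom omega (m - 1) = C0 ->
  trochoid_z omega zeta u0 d i O = trochoid_z omega zeta u0 d (S i) (m - 1).
Proof.
  intro Hgeom. unfold trochoid_z. rewrite Hgeom, trochoid_u_S. simpl.
  generalize (trochoid_u zeta u0 d i) (Cpow zeta i). intros a b. Cx_ring.
Qed.

Lemma trochoid_z_rotate (omega zeta u0 d : Cx) (th : R) (i j : nat) :
  Cmul (Cexpi th) omega = zeta ->
  rotate (trochoid_z omega zeta u0 d i O) th (trochoid_z omega zeta u0 d i (S j)) =
  trochoid_z omega zeta u0 d (S i) j.
Proof.
  intro Hth. unfold trochoid_z. rewrite Cgeom_Sl, trochoid_u_S, <- Hth. simpl.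
  generalize (trochoid_u (Cmul (Cexpi th) omega) u0 d i)
    (Cpow (Cmul (Cexpi th) omega) i) (Cgeom omega j). intros a b c. Cx_ring.
Qed.

Lemma trochoid_z_period (omega zeta u0 d : Cx) (n j : nat) :
  (1 <= n)%nat -> Cgeom zeta (n - 1) = C0 -> Cpow zeta n = C1 ->
  trochoid_z omega zeta u0 d n j = trochoid_z omega zeta u0 d O j.
Proof.
  intros Hn Hgeom Hpow. unfold trochoid_z. rewrite Hpow.
  destruct n as [|n]; [lia|]. replace (S n - 1)%nat with n in Hgeom by lia.
  unfold trochoid_u. rewrite Hgeom. simpl.
  generalize (Cgeom omega j). intro c. Cx_ring.
Qed.

Lemma trochoid_z_neq (omega zeta u0 d : Cx) (m : nat) :
  Cgeom omega (m - 1) = C0 -> d <> C0 ->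
  trochoid_z omega zeta u0 d O O <> trochoid_z omega zeta u0 d O (m - 1).
Proof.
  intros Hgeom Hd. unfold trochoid_z. rewrite Hgeom. simpl. intro H. apply Hd.
  Cx_ring. injection H as H1 H2. f_equal; lra.
Qed.

Lemma theta_spec (m k n l : nat) :
  (m <> 0)%nat -> (n <> 0)%nat ->
  Cmul (Cexpi (theta m k n l)) (Cexpi (2 * PI * INR k / INR m)) =
  Cexpi (2 * PI * INR l / INR n).
Proof.
  intros Hm Hn. rewrite Cexpi_add. f_equal. unfold theta.
  field; split; apply not_0_INR; assumption.
Qed.

Lemma Dpq_coloring_of_rotations (p q : Z) (z : nat -> nat -> Cx) (th : R) :
  let m := Z.abs_nat p in
  let n := Z.abs_nat q in
  (forall i, (i <= n - 1)%nat -> z i O = z (S i) (m - 1)%nat) ->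
  (forall i j, (i <= n - 1)%nat -> (1 <= j <= m - 1)%nat ->
     rotate (z i O) th (z i j) = z (S i) (j - 1)%nat) ->
  (forall j, (j <= m - 1)%nat -> z n j = z O j) ->
  Dpq_coloring p q (fun i j => (z i j, Cexpi th)).
Proof.
  intros m n Hlast Hrot Hper. split; [|split].
  - intros i Hi. f_equal. apply Hlast. fold n in Hi. lia.
  - intros j Hj. f_equal. apply Hper. fold m in Hj. lia.
  - intros i j Hi Hj. unfold rot_op; simpl. f_equal. symmetry. apply Hrot; unfold m, n; lia.
Qed.

Theorem mainTheorem5 (p q : Z) (k l : nat) (u0 d : Cx) :
  p <> 0%Z -> q <> 0%Z -> Z.gcd p q = 1%Z ->
  (1 <= k <= Z.abs_nat p - 1)%nat -> (1 <= l <= Z.abs_nat q - 1)%nat ->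
  d <> (0, 0) ->
  let m := Z.abs_nat p in
  let n := Z.abs_nat q in
  let th := theta m k n l in
  let z := tro_z m k n l u0 d in
  (forall i, (i <= n - 1)%nat -> z i O = z (S i) (m - 1)%nat) /\
  (forall i j, (i <= n - 1)%nat -> (1 <= j <= m - 1)%nat ->
     rotate (z i O) th (z i j) = z (S i) (j - 1)%nat) /\
  (forall j, (j <= m - 1)%nat -> z n j = z O j) /\
  (exists i j i' j', (i <= n)%nat /\ (j <= m - 1)%nat /\
     (i' <= n)%nat /\ (j' <= m - 1)%nat /\ z i j <> z i' j') /\
  Dpq_coloring p q (fun i j => (z i j, Cexpi th)) /\
  Dpq_nontrivial p q (fun i j => (z i j, Cexpi th)).
Proof.
  intros _ _ _ Hk Hl Hd m n th z.
  assert (Hgeom_m := Cgeom_primitive_root k m Hk).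
  assert (Hlast : forall i, (i <= n - 1)%nat -> z i O = z (S i) (m - 1)%nat).
  { intros i _. apply trochoid_z_S_last, Hgeom_m. }
  assert (Hrot : forall i j, (i <= n - 1)%nat -> (1 <= j <= m - 1)%nat ->
            rotate (z i O) th (z i j) = z (S i) (j - 1)%nat).
  { intros i [|j] _ Hj; [lia|]. replace (S j - 1)%nat with j by lia.
    apply trochoid_z_rotate, theta_spec; lia. }
  assert (Hper : forall j, (j <= m - 1)%nat -> z n j = z O j).
  { intros j _. apply trochoid_z_period;
      [lia | apply Cgeom_primitive_root, Hl | apply Cpow_root_unity; lia]. }
  assert (Hneq := trochoid_z_neq _ (Cexpi (2 * PI * INR l / INR n)) u0 d m Hgeom_m Hd).
  split; [exact Hlast|]. split; [exact Hrot|]. split; [exact Hper|].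
  split; [|split; [exact (Dpq_coloring_of_rotations p q z th Hlast Hrot Hper)|]].
  - exists O, O, O, (m - 1)%nat. repeat split; try lia. exact Hneq.
  - exists O, O, O, (m - 1)%nat. repeat split; try (unfold m, n; lia).
    intro H. exact (Hneq (f_equal fst H)).
Qed.
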